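(* Let $A$ be a finitely generated associative algebra with $M_N(A)=0$ for some $N$. For $a,b,d\in A$ and $m\in M_k(A)$, the element $[b,d][a,m]+[a,d][b,m]$ lies in $M_{k+2}(A)$.
   Context: $L_1=A$, $L_k=[A,L_{k-1}]$, $M_k=AL_kA$ (two-sided ideal generated by $L_k$). *)

From HB Require Import structures.
From mathcomp Require Import all_boot all_order all_algebra.
Set Implicit Arguments. Unset Strict Implicit. Unset Printing Implicit Defensive.
Import GRing.Theory.
Local Open Scope ring_scope.

Definition comm (K : fieldType) (A : algType K) (x y : A) : A := x * y - y * x.

Inductive in_subalg (K : fieldType) (A : algType K) (s : seq A) : A -> Prop :=
  | sa_gen x : x \in s -> in_subalg s x
  | sa_one : in_subalg s 1
  | sa_add x y : in_subalg s x -> in_subalg s y -> in_subalg s (x + y)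
  | sa_mul x y : in_subalg s x -> in_subalg s y -> in_subalg s (x * y)
  | sa_scale (c : K) x : in_subalg s x -> in_subalg s (c *: x).

Definition fin_gen_alg (K : fieldType) (A : algType K) : Prop :=
  exists s : seq A, forall x : A, in_subalg s x.

(* L k : the K-submodule L_1 = A, L_{k+1} = [A, L_k] (spanned by commutators).
   L 0 is the zero submodule (unused). *)
Inductive L (K : fieldType) (A : algType K) : nat -> A -> Prop :=
  | L_one x : L 1 x
  | L_comm k a l : L k.+1 l -> L k.+2 (comm a l)
  | L_zero k : L k 0
  | L_add k x y : L k x -> L k y -> L k (x + y)
  | L_scale k (c : K) x : L k x -> L k (c *: x).

Inductive M (K : fieldType) (A : algType K) (k : nat) : A -> Prop :=
  | M_gen x : L k x -> M k x
  | M_zero : M k 0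
  | M_add x y : M k x -> M k y -> M k (x + y)
  | M_scale (c : K) x : M k x -> M k (c *: x)
  | M_mull a x : M k x -> M k (a * x)
  | M_mulr a x : M k x -> M k (x * a).

(* Write Q(x, y1, y2, z) = [x, y1][y2, z] + [x, y2][y1, z], so that the element in
   question is -Q(d, b, a, m).  By the Leibniz rule Q(x, y1, y2, z) is a combination
   of double commutators [u, [v, z]] multiplied by elements of A, hence lies in
   M_{j+2} whenever z lies in L_j.  For k >= 1 the ideal M_k is spanned by products
   l y with l in L_k, and Q(x, y1, y2, l y) = Q(x, y1, y2, l) y + l Q(x, y1, y2, y)
   + [[x, y1], l][y2, y] + [[x, y2], l][y1, y], so it remains to place l Q(..., y)
   in M_{k+2}.  For k = 1 this holds as Q lies in M_3; for l = [c, w] with w in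
   L_{k-1} it follows from an identity writing [c, w] Q(..., y) as a combination of
   products in which some factor involves a triple commutator with w. *)

From Stdlib Require Ncring Ncring_tac.
From mathcomp Require Import all_boot all_order all_algebra.
Set Implicit Arguments. Unset Strict Implicit. Unset Printing Implicit Defensive.
Import GRing.Theory.
Local Open Scope ring_scope.

(* Lets Stdlib's [non_commutative_ring] decide identities in any MathComp ring. *)
#[local] Instance pzRing_ncring_ops (R : pzRingType) :
  @Ncring.Ring_ops R 0 1 +%R *%R (fun x y => x - y) -%R eq := {}.

#[local] Instance pzRing_ncring (R : pzRingType) : Ncring.Ring (Ro := pzRing_ncring_ops R).
Proof.
split; first exact: RelationClasses.eq_equivalence.
- by move=> ? ? -> ? ? ->.
- by move=> ? ? -> ? ? ->.
- by move=> ? ? -> ? ? ->.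
- by move=> ? ? ->.
- exact: add0r.
- exact: addrC.
- exact: addrA.
- exact: mul1r.
- exact: mulr1.
- exact: mulrA.
- exact: mulrDl.
- by move=> x y z; exact: mulrDr.
- by [].
- exact: subrr.
Qed.

Lemma M_opp (K : fieldType) (A : algType K) n (x : A) : M n x -> M n (- x).
Proof. by move=> Mx; rewrite -scaleN1r; apply: M_scale. Qed.

Definition commQ (K : fieldType) (A : algType K) (x y1 y2 z : A) :=
  comm x y1 * comm y2 z + comm x y2 * comm y1 z.

Ltac nc_ring := rewrite /commQ /comm; Ncring_tac.non_commutative_ring.

Ltac M_leaf t := first [exact: t | apply: M_mull; exact: t | apply: M_mulr; exact: t].

Ltac M_close leaf := repeat match goal with
  | |- M _ _ => solve [leaf]
  | |- M _ (_ + _) => apply: M_add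
  | |- M _ (- _) => apply: M_opp
  end.

Section CommutatorIdeals.
Variables (K : fieldType) (A : algType K).
Implicit Types (x y z u v w l m : A) (k n : nat).

Lemma L_pred n x : (1 < n)%N -> L n x -> L n.-1 x.
Proof.
move=> lt1n Lx; elim: Lx lt1n => [//|[|j] a l _ IH _|j _|j x1 x2 _ IH1 _ IH2 lt1n
  |j c x1 _ IH lt1n].
- exact: L_one.
- exact/L_comm/IH.
- exact: L_zero.
- exact: L_add (IH1 lt1n) (IH2 lt1n).
- exact: L_scale (IH lt1n).
Qed.

Lemma L_comm_closed k a l : (0 < k)%N -> L k l -> L k (comm a l).
Proof. by case: k => // k _ Ll; apply: (L_pred (n := k.+2)) => //; apply: L_comm. Qed.

Lemma M_comm2 k u v l : L k.+1 l -> M k.+3 (comm u (comm v l)).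
Proof. by move=> Ll; apply/M_gen/L_comm/L_comm. Qed.

Lemma M_commQ n z :
  (forall x y, M n (comm x (comm y z))) -> forall x y1 y2, M n (commQ x y1 y2 z).
Proof.
move=> Mz2 x y1 y2.
have -> : commQ x y1 y2 z = comm x (comm (y1 * y2) z) - y1 * comm x (comm y2 z)
  - comm x (comm y1 z) * y2 + comm (comm x y2) (comm y1 z) by nc_ring.
by M_close ltac:(M_leaf Mz2).
Qed.

Section TripleCommutators.
Variables (n : nat) (w : A).
Hypothesis Mw3 : forall x y z, M n (comm x (comm y (comm z w))).

Lemma M_commQ_comm x y1 y2 g : M n (commQ x y1 y2 (comm g w)).
Proof. by apply: M_commQ => ? ?; apply: Mw3. Qed.

Lemma M_comm2_mul_comm_sym x b g1 g2 :
  M n (comm x (comm b g1) * comm g2 w + comm g1 w * comm x (comm b g2)).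
Proof.
have -> : comm x (comm b g1) * comm g2 w + comm g1 w * comm x (comm b g2) =
    comm x (comm b (comm (g1 * g2) w)) - g1 * comm x (comm b (comm g2 w))
  - comm x (comm b (comm g1 w)) * g2
  + comm (comm x g2) (comm b (comm g1 w)) + comm (comm b g2) (comm x (comm g1 w))
  - commQ b g1 x (comm g2 w) - commQ x g1 b (comm g2 w)
  - commQ x g2 b (comm g1 w) - commQ b g2 x (comm g1 w) by nc_ring.
by M_close ltac:(first [exact: M_commQ_comm | M_leaf Mw3]).
Qed.

Lemma M_comm2_mul_comm2 x p q b g :
  M n (comm b (comm g w) * comm x (comm p q)).
Proof.
have -> : comm b (comm g w) * comm x (comm p q) =
    commQ x (comm p q) b (comm g w)
  - comm x b * comm p (comm q (comm g w)) + comm x b * comm q (comm p (comm g w))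
  - comm (comm x (comm p q)) (comm b (comm g w)) by nc_ring.
by M_close ltac:(first [exact: M_commQ_comm | M_leaf Mw3]).
Qed.

Lemma M_comm_mul_commQ c x y1 y2 y : M n (comm c w * commQ x y1 y2 y).
Proof.
have -> : comm c w * commQ x y1 y2 y = - (
    (comm y2 (comm y1 c) * comm (x * y) w + comm c w * comm y2 (comm y1 (x * y)))
  - (comm y2 (comm y1 c) * comm x w + comm c w * comm y2 (comm y1 x)) * y
  - x * (comm y2 (comm y1 c) * comm y w + comm c w * comm y2 (comm y1 y))
  + (comm x (comm y2 (comm y1 c)) * comm y w + comm (comm y1 c) w * comm x (comm y2 y))
  - comm y1 (comm c w) * comm x (comm y2 y) + comm c (comm y1 w) * comm x (comm y2 y)
  + comm x (comm c w) * comm y2 (comm y1 y)) by nc_ring.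
by M_close ltac:(first [exact: M_comm2_mul_comm2 | M_leaf M_comm2_mul_comm_sym]).
Qed.

End TripleCommutators.

Lemma M3_commQ x y1 y2 z : M 3 (commQ x y1 y2 z).
Proof. by apply: M_commQ => u v; apply: (M_comm2 (k := 0)); apply: L_one. Qed.

Lemma M_commQ_L k x y1 y2 l : L k.+1 l -> M k.+3 (commQ x y1 y2 l).
Proof. by move=> Ll; apply: M_commQ => u v; apply: M_comm2. Qed.

Lemma M_L_mul_commQ k x y1 y2 y l : (0 < k)%N -> L k l -> M k.+2 (l * commQ x y1 y2 y).
Proof.
move=> k_gt0 Ll; elim: Ll k_gt0 => {k l} [l _|k c w Lw _ _|k _
  |k l1 l2 _ IH1 _ IH2 k_gt0|k c l _ IH k_gt0].
- exact/M_mull/M3_commQ.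
- by apply: M_comm_mul_commQ => u v t; apply/M_gen/L_comm/L_comm/L_comm.
- by rewrite mul0r; apply: M_zero.
- by rewrite mulrDl; apply: M_add; [apply: IH1 | apply: IH2].
- by rewrite -scalerAl; apply/M_scale/IH.
Qed.

Inductive LmulA k : A -> Prop :=
  | LmulA_gen l y : L k l -> LmulA k (l * y)
  | LmulA0 : LmulA k 0
  | LmulAD x y : LmulA k x -> LmulA k y -> LmulA k (x + y)
  | LmulAZ (c : K) x : LmulA k x -> LmulA k (c *: x).

Lemma LmulA_mull k a m : (0 < k)%N -> LmulA k m -> LmulA k (a * m).
Proof.
move=> k_gt0; elim=> {m} [l y Ll||x y _ IHx _ IHy|c x _ IHx].
- have -> : a * (l * y) = l * (a * y) + comm a l * y by nc_ring.
  by apply: LmulAD; apply: LmulA_gen; last apply: L_comm_closed.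
- by rewrite mulr0; apply: LmulA0.
- by rewrite mulrDr; apply: LmulAD.
- by rewrite -scalerAr; apply: LmulAZ.
Qed.

Lemma LmulA_mulr k a m : LmulA k m -> LmulA k (m * a).
Proof.
elim=> {m} [l y Ll||x y _ IHx _ IHy|c x _ IHx].
- by rewrite -mulrA; apply: LmulA_gen.
- by rewrite mul0r; apply: LmulA0.
- by rewrite mulrDl; apply: LmulAD.
- by rewrite -scalerAl; apply: LmulAZ.
Qed.

Lemma M_LmulA k m : (0 < k)%N -> M k m -> LmulA k m.
Proof.
move=> k_gt0; elim=> {m} [x Lx||x y _ IHx _ IHy|c x _ IHx|a x _ IHx|a x _ IHx].
- by rewrite -[x]mulr1; apply: LmulA_gen.
- exact: LmulA0.
- exact: LmulAD.
- exact: LmulAZ.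
- exact: LmulA_mull.
- exact: LmulA_mulr.
Qed.

Lemma commQZ x y1 y2 (c : K) z : commQ x y1 y2 (c *: z) = c *: commQ x y1 y2 z.
Proof.
have commZr u : comm u (c *: z) = c *: comm u z.
  by rewrite /comm -scalerAr -scalerAl scalerBr.
by rewrite /commQ !commZr -!scalerAr scalerDr.
Qed.

Lemma M_commQ_LmulA k x y1 y2 m : (0 < k)%N -> LmulA k m -> M k.+2 (commQ x y1 y2 m).
Proof.
case: k => // k _; elim=> {m} [l y Ll||z1 z2 _ IH1 _ IH2|c z _ IH].
- (* The cross terms are [[x, y_i], l][y_j, y], expanded by the Jacobi identity. *)
  have -> : commQ x y1 y2 (l * y) = commQ x y1 y2 l * y + l * commQ x y1 y2 y
      + comm x (comm y1 l) * comm y2 y - comm y1 (comm x l) * comm y2 y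
      + comm x (comm y2 l) * comm y1 y - comm y2 (comm x l) * comm y1 y by nc_ring.
  have Ml2 u v : M k.+3 (comm u (comm v l)) by apply: M_comm2.
  have MlQ : M k.+3 (commQ x y1 y2 l) by apply: M_commQ_L.
  have MlyQ : M k.+3 (l * commQ x y1 y2 y) by apply: M_L_mul_commQ.
  by M_close ltac:(first [exact: MlyQ | M_leaf MlQ | M_leaf Ml2]).
- have -> : commQ x y1 y2 0 = 0 by nc_ring.
  exact: M_zero.
- have -> : commQ x y1 y2 (z1 + z2) = commQ x y1 y2 z1 + commQ x y1 y2 z2 by nc_ring.
  exact: M_add.
- by rewrite commQZ; apply: M_scale.
Qed.

Lemma M_commQ_M k x y1 y2 m : (0 < k)%N -> M k m -> M k.+2 (commQ x y1 y2 m).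
Proof. by move=> k_gt0 Mm; apply/M_commQ_LmulA/M_LmulA. Qed.

End CommutatorIdeals.

Theorem lemma3p6 (K : fieldType) (A : algType K)
  (hfg : fin_gen_alg A) (N : nat) (hN : forall x : A, M N x -> x = 0)
  (k : nat) (hk : (1 <= k)%N) (a b d m : A) (hm : M k m) :
  M (k + 2) (comm b d * comm a m + comm a d * comm b m).
Proof.
have -> : comm b d * comm a m + comm a d * comm b m = - commQ d b a m by nc_ring.
by rewrite addn2; apply/M_opp/M_commQ_M.
Qed.
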